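(* Let $S\in\{0,1\}^\omega$. 1. If $\rho_{\mathrm{LZ}}(S)=1$, then $S$ is not LZ-deep. 2. If $\mathrm{Dim}_{\mathrm{FS}}(S)=0$, then $S$ is not LZ-deep.
   Context: $S\upharpoonright n$ is the length-$n$ prefix of $S$. A finite-state transducer (FST) is $T=(Q,q_0,\delta,\nu)$ with finite state set $Q$, start state $q_0$, $\delta:Q\times\{0,1\}\to Q$, $\nu:Q\times\{0,1\}\to\{0,1\}^*$; $T(\lambda)=\lambda$, $T(xb)=T(x)\nu(\hat\delta(x),b)$; $T$ is an ILFST (information lossless) if $x\mapsto(T(x),\hat\delta(x))$ is injective. LZ denotes the Lempel–Ziv 78 compressor: it parses $x=x_1x_2\cdots x_n$ into phrases such that each phrase is distinct from all earlier ones (except possibly the last) and each phrase is $x_i=x_{l(i)}b_i$ with $l(i)<i$, $b_i\in\{0,1\}$, $x_0=\lambda$; it outputs $\mathrm{LZ}(x)=c_{l(1)}b_1c_{l(2)}b_2\cdots c_{l(n)}b_n$, where $c_j$ is a prefix-free encoding of the dictionary index $j$. $\rho_{\mathrm{LZ}}(S)=\liminf_{n}|\mathrm{LZ}(S\upharpoonright n)|/n$; $\mathrm{Dim}_{\mathrm{FS}}(S)=\inf_{T\in\mathrm{ILFST}}\limsup_n |T(S\upharpoonright n)|/n$. $S$ is LZ-deep if there is $\alpha>0$ such that for every ILFST $C$, $|C(S\upharpoonright n)|-|\mathrm{LZ}(S\upharpoonright n)|\ge\alpha n$ for all but finitely many $n$. *)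

From HB Require Import structures.
From mathcomp Require Import all_boot all_order all_algebra.
From mathcomp Require Import all_classical all_reals all_analysis.
Set Implicit Arguments. Unset Strict Implicit. Unset Printing Implicit Defensive.
Import Order.TTheory GRing.Theory Num.Theory.
Local Open Scope classical_set_scope.
Local Open Scope ring_scope.

Definition pref (S : nat -> bool) (n : nat) : seq bool := mkseq S n.

Record fst (Q : finType) := FST {
  fst_q0 : Q;
  fst_delta : Q -> bool -> Q;
  fst_nu : Q -> bool -> seq bool }.

Definition fst_run (Q : finType) (T : fst Q) (x : seq bool) : Q * seq bool :=
  foldl (fun st b => (fst_delta T st.1 b, st.2 ++ fst_nu T st.1 b))
        (fst_q0 T, [::]) x.

Definition fst_out (Q : finType) (T : fst Q) (x : seq bool) : seq bool :=
  (fst_run T x).2.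
Definition fst_state (Q : finType) (T : fst Q) (x : seq bool) : Q :=
  (fst_run T x).1.

Definition ILFST (Q : finType) (T : fst Q) : Prop :=
  injective (fun x => (fst_out T x, fst_state T x)).

(* c : nat -> seq bool is the prefix-free encoding of dictionary indices. *)
Definition prefix_free (c : nat -> seq bool) : Prop :=
  forall i j, i <> j -> ~~ prefix (c i) (c j).

(* State: (dictionary [:: x_0 = [::]; x_1; ...], current partial phrase, output).
   Reading bit b: if cur ++ [b] is already in the dictionary, keep extending;
   otherwise the new phrase x_i = cur ++ [b] = x_{l(i)} b with l(i) the index of
   cur, emit c_{l(i)} b and add x_i to the dictionary. *)
Definition lz_step (c : nat -> seq bool)
    (st : seq (seq bool) * seq bool * seq bool) (b : bool) :=
  let: (dict, cur, out) := st in
  let cur' := rcons cur b in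
  if cur' \in dict then (dict, cur', out)
  else (rcons dict cur', [::], out ++ c (index cur dict) ++ [:: b]).

(* At the end, a non-empty leftover cur is a (repeated) dictionary phrase
   x_{l} b; it is output as c_{l} b (the last phrase, possibly not new). *)
Definition LZ (c : nat -> seq bool) (x : seq bool) : seq bool :=
  let: (dict, cur, out) := foldl (lz_step c) ([:: [::]], [::], [::]) x in
  if cur is [::] then out
  else out ++ c (index (belast (head false cur) (behead cur)) dict)
           ++ [:: last false cur].

Definition rho_LZ (R : realType) (c : nat -> seq bool) (S : nat -> bool)
  : \bar R :=
  limn_einf (fun n => ((size (LZ c (pref S n)))%:R / n%:R : R)%:E).

Definition Dim_FS (R : realType) (S : nat -> bool) : \bar R :=
  ereal_inf [set x : \bar R | exists (Q : finType) (T : fst Q),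
     ILFST T /\
     x = limn_esup (fun n => ((size (fst_out T (pref S n)))%:R / n%:R : R)%:E)].

Definition LZ_deep (R : realType) (c : nat -> seq bool) (S : nat -> bool)
  : Prop :=
  exists alpha : R, 0 < alpha /\
    forall (Q : finType) (C : fst Q), ILFST C ->
      exists N : nat, forall n : nat, (N <= n)%N ->
        (size (fst_out C (pref S n)))%:R - (size (LZ c (pref S n)))%:R
          >= alpha * n%:R.

From HB Require Import structures.
From mathcomp Require Import all_boot all_order all_algebra.
From mathcomp Require Import all_classical all_reals all_analysis.
From mathcomp Require Import lra.
Import Order.TTheory GRing.Theory Num.Theory.
Local Open Scope classical_set_scope.
Local Open Scope ring_scope.

(* Depth would give a gap [alpha * n] between every ILFST and LZ on all long
   prefixes.  Against the identity transducer this caps the LZ ratio at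
   [1 - alpha], so [rho_LZ S < 1]; and since LZ output has nonnegative length,
   every ILFST has ratio at least [alpha] eventually, so [Dim_FS S >= alpha > 0].
   Nothing about the index code [c] is used, so [hc] plays no role. *)

Section limn_einf_esup_near.
Context {R : realType}.
Local Open Scope ereal_scope.
Implicit Types (u : (\bar R)^nat) (l : \bar R).

Lemma limn_einf_le_near u l : (\forall n \near \oo, u n <= l) -> limn_einf u <= l.
Proof.
move=> ul; rewrite limn_einf_lim; apply: lime_le; first exact: is_cvg_einfs.
apply: filterS ul => n unl; apply: le_trans unl.
by apply: ereal_inf_lbound; exists n => /=.
Qed.

Lemma limn_esup_ge_near u l : (\forall n \near \oo, l <= u n) -> l <= limn_esup u.
Proof.
move=> lu; rewrite limn_esup_lim; apply: lime_ge; first exact: is_cvg_esups.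
apply: filterS lu => n lun; apply: (le_trans lun).
by apply: ereal_sup_ubound; exists n => /=.
Qed.

End limn_einf_esup_near.

Definition id_fst : fst unit := FST tt (fun _ _ => tt) (fun _ b => [:: b]).

Lemma fst_out_rcons (Q : finType) (T : fst Q) x b :
  fst_out T (rcons x b) = fst_out T x ++ fst_nu T (fst_state T x) b.
Proof. by rewrite /fst_out /fst_state /fst_run foldl_rcons. Qed.

Lemma fst_out_id x : fst_out id_fst x = x.
Proof.
elim/last_ind: x => [//|x b IHx].
by rewrite fst_out_rcons IHx cats1.
Qed.

Lemma ILFST_id : ILFST id_fst.
Proof. by move=> x y [] /=; rewrite !fst_out_id. Qed.

Lemma size_pref S n : size (pref S n) = n.
Proof. exact: size_mkseq. Qed.

Lemma LZ_deep_ratio_gap (R : realType) c S : LZ_deep R c S ->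
  exists2 alpha : R, 0 < alpha & forall Q (C : fst Q), ILFST C ->
    \forall n \near \oo,
      (size (LZ c (pref S n)))%:R / n%:R + alpha
        <= (size (fst_out C (pref S n)))%:R / n%:R.
Proof.
case=> alpha [alpha_gt0 deep]; exists alpha => // Q C CIL.
have [N gapN] := deep Q C CIL; exists N.+1 => // n /= ltNn.
have n_gt0 : 0 < n%:R :> R by rewrite ltr0n (leq_trans _ ltNn).
rewrite -[alpha](mulfK (lt0r_neq0 n_gt0)) -mulrDl ler_pM2r ?invr_gt0 //.
by have := gapN n (ltnW ltNn); rewrite lerBrDl addrC.
Qed.

Theorem mainTheorem6 (R : realType) (c : nat -> seq bool)
    (hc : prefix_free c) (S : nat -> bool) :
  (rho_LZ R c S = 1%:E -> ~ LZ_deep R c S) /\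
  (Dim_FS R S = 0%:E -> ~ LZ_deep R c S).
Proof.
split=> [rho1|dim0] /LZ_deep_ratio_gap [alpha alpha_gt0 gap].
- suff : (rho_LZ R c S <= (1 - alpha)%:E)%E by rewrite rho1 lee_fin; lra.
  apply: limn_einf_le_near; have := gap _ _ ILFST_id.
  apply: filter_app; near=> n; rewrite fst_out_id size_pref divff; last first.
    by rewrite pnatr_eq0 -lt0n; near: n; exists 1%N.
  by rewrite lee_fin; lra.
- suff : (alpha%:E <= Dim_FS R S)%E by rewrite dim0 lee_fin; lra.
  apply: le_ereal_inf_tmp => _ [Q [C [CIL ->]]].
  apply: limn_esup_ge_near; apply: filterS (gap _ C CIL) => n gapn.
  rewrite lee_fin; apply: le_trans gapn; rewrite lerDr.
  by rewrite divr_ge0 ?ler0n.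
Unshelve. all: by end_near.
Qed.
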